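(* Let $R$ be a commutative ring with identity and let $a\in R$ be a non-zero element with $a\notin R^{\ast}$. Consider the following conditions on $a$: (i) there exist $b\in R$ and $c\in\operatorname{Sqf} R$ such that $a=b^2c$; (ii) there exist $n\geqslant 0$ and $s_0,s_1,\dots,s_n\in\operatorname{Sqf} R$ such that $a=s_n^{2^n}s_{n-1}^{2^{n-1}}\cdots s_1^2s_0$; (iii) there exist $n\geqslant 1$, $s_1,\dots,s_n\in(\operatorname{Sqf} R)\setminus R^{\ast}$, integers $0\leqslant k_1<k_2<\dots<k_n$, and $c\in R^{\ast}$ such that $a=c\,s_n^{2^{k_n}}s_{n-1}^{2^{k_{n-1}}}\cdots s_1^{2^{k_1}}$; (iv) there exist $n\geqslant 1$ and $s_1,\dots,s_n\in\operatorname{Sqf} R$ such that $s_i\mid s_{i+1}$ for $i=1,\dots,n-1$ and $a=s_1s_2\cdots s_n$; (v) there exist $n\geqslant 1$, $s_1,\dots,s_n\in(\operatorname{Sqf} R)\setminus R^{\ast}$, integers $k_1,\dots,k_n\geqslant 1$, and $c\in R^{\ast}$ such that $s_i\mid s_{i+1}$ and $s_i\not\sim s_{i+1}$ for $i=1,\dots,n-1$, and $a=c\,s_1^{k_1}s_2^{k_2}\cdots s_n^{k_n}$; (vi) there exist $n\geqslant 1$ and $s_1,\dots,s_n\in\operatorname{Sqf} R$ such that $s_i$ and $s_j$ are relatively prime for $i\neq j$, and $a=s_1s_2^2s_3^3\cdots s_n^n$; (vii) there exist $n\geqslant 1$, $s_1,\dots,s_n\in(\operatorname{Sqf} R)\setminus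 R^{\ast}$, integers $1\leqslant k_1<k_2<\dots<k_n$, and $c\in R^{\ast}$ such that $s_i$ and $s_j$ are relatively prime for $i\neq j$, and $a=c\,s_1^{k_1}s_2^{k_2}\cdots s_n^{k_n}$. Then: (ii) implies (i); (ii) and (iii) are equivalent; (iv) and (v) are equivalent; (v) implies (vi); and (vi) and (vii) are equivalent.
   Context: All rings are commutative with identity. $R^{\ast}$ denotes the set of invertible elements of $R$. For $a,b\in R$, $a\sim b$ means $a$ and $b$ are associated, and $a\mid b$ means $a$ divides $b$. Elements $a,b$ are relatively prime if they have no common non-invertible divisor. An element $a\in R$ is square-free if it cannot be written as $a=b^2c$ with $b\in R\setminus R^{\ast}$ and $c\in R$; $\operatorname{Sqf} R$ denotes the set of square-free elements of $R$. *)

From mathcomp Require Import all_boot all_order all_algebra.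
Set Implicit Arguments. Unset Strict Implicit. Unset Printing Implicit Defensive.
Import GRing.Theory.
Local Open Scope ring_scope.

Definition rdvd (R : comUnitRingType) (a b : R) : Prop := exists c : R, b = a * c.

Definition rassoc (R : comUnitRingType) (a b : R) : Prop := rdvd a b /\ rdvd b a.

Definition rcoprime (R : comUnitRingType) (a b : R) : Prop :=
  forall d : R, rdvd d a -> rdvd d b -> d \is a GRing.unit.

Definition sqfree (R : comUnitRingType) (a : R) : Prop :=
  ~ (exists b c : R, b \isn't a GRing.unit /\ a = b ^+ 2 * c).

(* A factorization is put in reduced form by pulling its unit factors out into a constant c;
   conversely, the factors of a reduced form are regrouped by exponent (each exponent occurs at
   most once) and c is absorbed into the factor of exponent 1.  A divisor chain is reduced by
   merging associated neighbours, which differ by a unit since they are square-free, and is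
   expanded back by repeating its i-th member k_i times.  For (v) => (vi) write
   t_i = x_1 ... x_i: then prod_i t_i^k_i = prod_j x_j^(k_j + ... + k_N), the exponents are
   distinct, and the x_j are square-free and pairwise coprime because their product t_N is
   square-free. *)

From mathcomp Require Import all_boot all_order all_algebra.
From mathcomp Require Import zify ring.
From Stdlib Require Import Classical ClassicalEpsilon.
Set Implicit Arguments. Unset Strict Implicit. Unset Printing Implicit Defensive.
Import GRing.Theory.
Local Open Scope ring_scope.

Section Divisibility.

Variable R : comUnitRingType.
Implicit Types c d u x y : R.

Lemma rdvd_refl x : rdvd x x.
Proof. by exists 1; rewrite mulr1. Qed.

Lemma rdvd_trans y x z : rdvd x y -> rdvd y z -> rdvd x z.
Proof. by move=> [a ->] [b ->]; exists (a * b); rewrite mulrA. Qed.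

Lemma rdvd_unitMl c x y : c \is a GRing.unit -> rdvd x y -> rdvd (c * x) y.
Proof. by move=> c_u [a ->]; exists (c^-1 * a); rewrite mulrACA mulrV // mul1r. Qed.

Lemma rdvd_unit d u : rdvd d u -> u \is a GRing.unit -> d \is a GRing.unit.
Proof. by move=> [x ->]; rewrite unitrM => /andP[]. Qed.

Lemma sqfree_unit u : u \is a GRing.unit -> sqfree u.
Proof.
move=> u_u [b [c [b_nu u_def]]]; move: u_u.
by rewrite u_def expr2 -mulrA unitrM (negbTE b_nu).
Qed.

Lemma sqfree_rdvd d x : rdvd d x -> sqfree x -> sqfree d.
Proof.
move=> [y ->] x_sqf [b [c [b_nu d_def]]]; apply: x_sqf.
by exists b, (c * y); rewrite d_def mulrA.
Qed.

Lemma sqfree_unitMl c x : c \is a GRing.unit -> sqfree x -> sqfree (c * x).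
Proof.
move=> c_u; apply: sqfree_rdvd; exists c^-1.
by rewrite mulrC mulrA mulVr // mul1r.
Qed.

Lemma sqfreeM_rcoprime x y : sqfree (x * y) -> rcoprime x y.
Proof.
move=> xy_sqf d [a x_def] [b y_def]; apply/negPn/negP => d_nu; apply: xy_sqf.
by exists d, (a * b); rewrite x_def y_def expr2 mulrACA.
Qed.

Lemma sqfree_rassoc x y : sqfree x -> rassoc x y -> exists2 u, u \is a GRing.unit & y = x * u.
Proof.
move=> x_sqf [[u y_def] [v x_def]]; exists u => //.
have x_uv : x = x * (u * v) by rewrite mulrA -y_def.
apply/negPn/negP => u_nu; apply: x_sqf; exists (u * v), x.
split; first by rewrite unitrM negb_and u_nu.
by rewrite expr2 [RHS]mulrC (mulrA x) -x_uv.
Qed.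

Lemma rcoprime_sym x y : rcoprime x y -> rcoprime y x.
Proof. by move=> xy d dy dx; apply: xy. Qed.

Lemma rcoprime_unitMl c x y : c \is a GRing.unit -> rcoprime x y -> rcoprime (c * x) y.
Proof.
move=> c_u xy d [a cx] dy; apply: xy dy; exists (c^-1 * a).
by rewrite mulrCA -cx mulrA mulVr // mul1r.
Qed.

Lemma rcoprime_unitMr c x y : c \is a GRing.unit -> rcoprime x y -> rcoprime x (c * y).
Proof. by move=> c_u /rcoprime_sym xy; apply/rcoprime_sym/rcoprime_unitMl. Qed.

Lemma sqfree_prod_factor (I : eqType) (r : seq I) (F : I -> R) i :
  i \in r -> sqfree (\prod_(j <- r) F j) -> sqfree (F i).
Proof.
move=> i_r; apply: sqfree_rdvd.
by rewrite (big_rem i i_r); exists (\prod_(j <- rem i r) F j).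
Qed.

Lemma sqfree_prod_rcoprime (I : eqType) (r : seq I) (F : I -> R) i j :
  uniq r -> i \in r -> j \in r -> i != j ->
  sqfree (\prod_(l <- r) F l) -> rcoprime (F i) (F j).
Proof.
move=> r_uniq i_r j_r ij /sqfree_rdvd r_sqf; apply/sqfreeM_rcoprime/r_sqf.
have j_ri : j \in [seq l <- r | l != i] by rewrite mem_filter eq_sym ij.
rewrite (bigD1_seq i) // -big_filter (bigD1_seq j) ?filter_uniq //.
by exists (\prod_(l <- [seq l <- r | l != i] | l != j) F l); rewrite /= mulrA.
Qed.

Lemma chain_rdvd_leq n (t : nat -> R) :
  (forall i, (1 <= i < n)%N -> rdvd (t i) (t i.+1)) ->
  forall i j, (1 <= i)%N -> (i <= j <= n)%N -> rdvd (t i) (t j).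
Proof.
move=> t_chain i j i_gt0; elim: j => [|j IHj] /andP[ij jn]; first by exfalso; lia.
rewrite leq_eqVlt in ij; case/orP: ij => [/eqP -> | ij]; first exact: rdvd_refl.
by apply: rdvd_trans (IHj _) (t_chain j _); lia.
Qed.

End Divisibility.

Section IncreasingExponents.

Variables (k : nat -> nat) (n : nat).
Hypothesis k_incr : forall i, (1 <= i < n)%N -> (k i < k i.+1)%N.

Lemma incr_ltn i j : (1 <= i)%N -> (i < j <= n)%N -> (k i < k j)%N.
Proof.
move=> i_gt0; elim: j => // j IHj /andP[ij jn].
have k_j : (k j < k j.+1)%N by apply: k_incr; lia.
have [ij' | ji | ->] := ltngtP i j; [| lia | exact: k_j].
by apply: ltn_trans k_j; apply: IHj; lia.
Qed.

Lemma incr_leq i j : (1 <= i)%N -> (i <= j <= n)%N -> (k i <= k j)%N.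
Proof.
move=> i_gt0 /andP[]; rewrite leq_eqVlt => /orP[/eqP -> // | ij jn].
by apply/ltnW/incr_ltn => //; rewrite ij.
Qed.

Lemma incr_inj i j : (1 <= i <= n)%N -> (1 <= j <= n)%N -> k i = k j -> i = j.
Proof.
move=> i_rng j_rng kij; have [ij | ji | //] := ltngtP i j.
- by have := @incr_ltn i j; rewrite kij ltnn; lia.
- by have := @incr_ltn j i; rewrite kij ltnn; lia.
Qed.

End IncreasingExponents.

Section IndexedProducts.

Variable R : comUnitRingType.
Implicit Types (c : R) (s t : nat -> R) (e k : nat -> nat).

Lemma big_nth1 (S : seq nat) (F : nat -> R) :
  \prod_(i <- S) F i = \prod_(1 <= j < (size S).+1) F (nth 0%N S j.-1).
Proof. by rewrite (big_nth 0%N) big_add1. Qed.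

Lemma prod_nat_recr_eq (F G : nat -> R) lo n : (lo <= n)%N ->
  (forall i, (lo <= i < n)%N -> F i = G i) ->
  \prod_(lo <= i < n.+1) F i = \prod_(lo <= i < n) G i * F n.
Proof. by move=> lo_n FG; rewrite big_nat_recr //= (eq_big_nat _ _ FG). Qed.

Lemma prod_scale_first c (T : nat -> R) e lo m : (lo < m)%N -> e lo = 1%N ->
  \prod_(lo <= j < m) [eta T with lo |-> c * T lo] j ^+ e j =
  c * \prod_(lo <= j < m) T j ^+ e j.
Proof.
move=> lo_m e_lo; rewrite !(big_ltn lo_m) /= eqxx e_lo !expr1 -mulrA.
by congr (_ * (_ * _)); apply: eq_big_nat => j /andP[lo_j _]; rewrite gtn_eqF.
Qed.

Lemma sqfree_scale_at (T : nat -> R) c p j : c \is a GRing.unit ->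
  sqfree (T j) -> sqfree ([eta T with p |-> c * T p] j).
Proof. by move=> c_u /=; case: eqP => [->|_] //; exact: sqfree_unitMl. Qed.

Lemma rcoprime_scale_at (T : nat -> R) c p j j' : c \is a GRing.unit ->
  rcoprime (T j) (T j') ->
  rcoprime ([eta T with p |-> c * T p] j) ([eta T with p |-> c * T p] j').
Proof.
move=> c_u /=; case: eqP => [->|_]; case: eqP => [->|_] T_cop.
- exact: rcoprime_unitMl c_u (rcoprime_unitMr c_u T_cop).
- exact: rcoprime_unitMl c_u T_cop.
- exact: rcoprime_unitMr c_u T_cop.
- exact: T_cop.
Qed.

Lemma prod_drop_units t e lo m :
  \prod_(lo <= j < m) t j ^+ e j \isn't a GRing.unit ->
  exists n (k : nat -> nat) c, [/\ (0 < n)%N, c \is a GRing.unit,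
    forall i, (1 <= i <= n)%N -> (lo <= k i < m)%N /\ t (k i) \isn't a GRing.unit,
    forall i, (1 <= i < n)%N -> (k i < k i.+1)%N &
    \prod_(lo <= j < m) t j ^+ e j = c * \prod_(1 <= i < n.+1) t (k i) ^+ e (k i)].
Proof.
pose S := [seq j <- index_iota lo m | t j \isn't a GRing.unit].
have S_sorted : sorted ltn S.
  by apply: sorted_filter; [exact: ltn_trans | exact: iota_ltn_sorted].
set c := \prod_(lo <= j < m | t j \is a GRing.unit) t j ^+ e j.
have c_u : c \is a GRing.unit by apply: unitr_prod => j t_u; rewrite unitrX.
have -> : \prod_(lo <= j < m) t j ^+ e j =
    c * \prod_(1 <= i < (size S).+1) t (nth 0%N S i.-1) ^+ e (nth 0%N S i.-1).
  rewrite (bigID (fun j => t j \is a GRing.unit)) /=.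
  by rewrite -(big_nth1 S (fun j => t j ^+ e j)) big_filter.
move=> prod_nu; exists (size S), (fun i => nth 0%N S i.-1), c; split => //.
- rewrite lt0n size_eq0; apply: contra prod_nu => /eqP ->.
  by rewrite big_geq // mulr1.
- move=> i /andP[i_gt0 i_le]; have : nth 0%N S i.-1 \in S by rewrite mem_nth // prednK.
  by rewrite mem_filter mem_index_iota => /andP[].
- move=> i /andP[i_gt0 i_lt].
  by apply: (sorted_ltn_nth ltn_trans 0%N S_sorted); rewrite ?inE /=; lia.
Qed.

Definition repeat_indices (k : nat -> nat) N :=
  sort leq (flatten [seq nseq (k i) i | i <- index_iota 1 N.+1]).

Lemma mem_repeat_indices k N i :
  (i \in repeat_indices k N) = (1 <= i <= N)%N && (0 < k i)%N.
Proof.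
rewrite mem_sort; apply/flatten_mapP/andP => [[j] | [i_rng ki_gt0]].
  by rewrite mem_index_iota mem_nseq => j_rng /andP[kj_gt0 /eqP ->].
by exists i; rewrite ?mem_index_iota ?mem_nseq ?ki_gt0 ?eqxx.
Qed.

Lemma prod_repeat_indices t k N :
  \prod_(i <- repeat_indices k N) t i = \prod_(1 <= i < N.+1) t i ^+ k i.
Proof.
rewrite (perm_big _ (permEl (perm_sort leq _))) big_flatten big_map.
by apply: eq_bigr => i _; rewrite big_nseq iter_mulr_1.
Qed.

Lemma prod_prefix_prod_expn (x : nat -> R) (k : nat -> nat) n :
  \prod_(1 <= i < n.+1) (\prod_(1 <= j < i.+1) x j) ^+ k i =
  \prod_(1 <= j < n.+1) x j ^+ (\sum_(j <= i < n.+1) k i)%N.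
Proof.
elim: n => [|n IHn]; first by rewrite !big_geq.
rewrite big_nat_recr //= IHn -prodrXl.
under [RHS]eq_big_nat => j /andP[_ j_le] do rewrite big_nat_recr //= exprD.
rewrite big_split /=; congr (_ * _).
by rewrite [RHS]big_nat_recr //= [X in x _ ^+ X]big_geq // expr0 mulr1.
Qed.

Section Fibers.

Variables (s : nat -> R) (k : nat -> nat) (n : nat).

Definition fiber_prod j := \prod_(1 <= i < n.+1 | k i == j) s i.

Lemma prod_fiber_prod e lo m : (forall i, (1 <= i <= n)%N -> (lo <= k i < m)%N) ->
  \prod_(lo <= j < m) fiber_prod j ^+ e j = \prod_(1 <= i < n.+1) s i ^+ e (k i).
Proof.
move=> k_rng; under eq_bigr do rewrite -prodrXl big_mkcond.
rewrite exchange_big_nat; apply: eq_big_nat => i i_rng.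
rewrite -big_mkcond (eq_bigl (fun j => j == k i)) => [|j]; last exact: eq_sym.
by rewrite big_nat1_eq k_rng.
Qed.

Hypothesis k_inj : forall i j, (1 <= i <= n)%N -> (1 <= j <= n)%N -> k i = k j -> i = j.

Lemma fiber_prodP j :
  fiber_prod j = 1 \/ exists2 i, (1 <= i <= n)%N & k i = j /\ fiber_prod j = s i.
Proof.
have [/hasP[i] | no_i] := boolP (has (fun i => k i == j) (index_iota 1 n.+1)); last first.
  by left; rewrite /fiber_prod big_hasC.
rewrite mem_index_iota => i_rng /eqP ki; right; exists i => //; split => //.
rewrite /fiber_prod big_mkcond (bigD1_seq i) ?mem_index_iota ?iota_uniq //= ki eqxx.
rewrite big1_seq ?mulr1 // => i' /andP[i'i]; rewrite mem_index_iota => i'_rng.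
by case: eqP => // ki'; move: i'i; rewrite (k_inj i'_rng i_rng) ?eqxx // ki ki'.
Qed.

Lemma sqfree_fiber_prod j : (forall i, (1 <= i <= n)%N -> sqfree (s i)) ->
  sqfree (fiber_prod j).
Proof.
move=> s_sqf; have [-> | [i i_rng [_ ->]]] := fiber_prodP j; last exact: s_sqf.
exact/sqfree_unit/unitr1.
Qed.

Lemma rcoprime_fiber_prod j j' :
  (forall i i', (1 <= i <= n)%N -> (1 <= i' <= n)%N -> i != i' -> rcoprime (s i) (s i')) ->
  j != j' -> rcoprime (fiber_prod j) (fiber_prod j').
Proof.
move=> s_cop jj'; have [-> | [i i_rng [ki ->]]] := fiber_prodP j.
  by move=> d /rdvd_unit /(_ (unitr1 R)).
have [-> | [i' i'_rng [ki' ->]]] := fiber_prodP j'.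
  by move=> d _ /rdvd_unit /(_ (unitr1 R)).
by apply: s_cop => //; apply: contra jj' => /eqP ii'; rewrite -ki -ki' ii'.
Qed.

End Fibers.

End IndexedProducts.

Section Factorizations.

Variable R : comUnitRingType.
Implicit Types a : R.

Definition square_sqf_factorization a := exists b c : R, sqfree c /\ a = b ^+ 2 * c.

Definition dyadic_sqf_factorization a := exists (n : nat) (s : nat -> R),
  (forall i, (i <= n)%N -> sqfree (s i)) /\
  a = \prod_(0 <= i < n.+1) s i ^+ (2 ^ i)%N.

Definition reduced_dyadic_sqf_factorization a :=
  exists (n : nat) (s : nat -> R) (k : nat -> nat) (c : R),
  (1 <= n)%N /\
  (forall i, (1 <= i <= n)%N -> sqfree (s i) /\ s i \isn't a GRing.unit) /\
  (forall i, (1 <= i < n)%N -> (k i < k i.+1)%N) /\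
  c \is a GRing.unit /\
  a = c * \prod_(1 <= i < n.+1) s i ^+ (2 ^ k i)%N.

Definition sqf_chain_factorization a := exists (n : nat) (s : nat -> R),
  (1 <= n)%N /\
  (forall i, (1 <= i <= n)%N -> sqfree (s i)) /\
  (forall i, (1 <= i < n)%N -> rdvd (s i) (s i.+1)) /\
  a = \prod_(1 <= i < n.+1) s i.

Definition reduced_sqf_chain_factorization a :=
  exists (n : nat) (s : nat -> R) (k : nat -> nat) (c : R),
  (1 <= n)%N /\
  (forall i, (1 <= i <= n)%N -> sqfree (s i) /\ s i \isn't a GRing.unit) /\
  (forall i, (1 <= i <= n)%N -> (1 <= k i)%N) /\
  (forall i, (1 <= i < n)%N -> rdvd (s i) (s i.+1) /\ ~ rassoc (s i) (s i.+1)) /\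
  c \is a GRing.unit /\
  a = c * \prod_(1 <= i < n.+1) s i ^+ k i.

Definition sqf_power_factorization a := exists (n : nat) (s : nat -> R),
  (1 <= n)%N /\
  (forall i, (1 <= i <= n)%N -> sqfree (s i)) /\
  (forall i j, (1 <= i <= n)%N -> (1 <= j <= n)%N -> i != j -> rcoprime (s i) (s j)) /\
  a = \prod_(1 <= i < n.+1) s i ^+ i.

Definition reduced_sqf_power_factorization a :=
  exists (n : nat) (s : nat -> R) (k : nat -> nat) (c : R),
  (1 <= n)%N /\
  (forall i, (1 <= i <= n)%N -> sqfree (s i) /\ s i \isn't a GRing.unit) /\
  (1 <= k 1)%N /\
  (forall i, (1 <= i < n)%N -> (k i < k i.+1)%N) /\
  (forall i j, (1 <= i <= n)%N -> (1 <= j <= n)%N -> i != j -> rcoprime (s i) (s j)) /\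
  c \is a GRing.unit /\
  a = c * \prod_(1 <= i < n.+1) s i ^+ k i.

Lemma dyadic_to_square a : dyadic_sqf_factorization a -> square_sqf_factorization a.
Proof.
move=> [n [s [s_sqf ->]]]; exists (\prod_(0 <= i < n) s i.+1 ^+ (2 ^ i)%N), (s 0%N).
split; first exact: s_sqf.
rewrite big_ltn // big_add1 /= mulrC -prodrXl; congr (_ * _).
by apply: eq_bigr => i _; rewrite expnSr exprM.
Qed.

Lemma dyadic_to_reduced a : a \isn't a GRing.unit ->
  dyadic_sqf_factorization a -> reduced_dyadic_sqf_factorization a.
Proof.
move=> a_nu [n [s [s_sqf a_def]]]; subst a.
have [N [k [c [N_gt0 c_u k_rng k_incr ->]]]] := prod_drop_units a_nu.
exists N, (fun i => s (k i)), k, c; split => //; split; last by do !split.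
by move=> i /k_rng[/andP[_ k_lt] s_nu]; split => //; apply: s_sqf; lia.
Qed.

Lemma reduced_to_dyadic a : reduced_dyadic_sqf_factorization a -> dyadic_sqf_factorization a.
Proof.
move=> [n [s [k [c [_ [s_sqf [k_incr [c_u ->]]]]]]]].
have T_sqf j : sqfree (fiber_prod s k n j).
  by apply: (sqfree_fiber_prod (incr_inj k_incr)) => i /s_sqf[].
exists (k n), [eta fiber_prod s k n with 0%N |-> c * fiber_prod s k n 0%N]; split.
  by move=> j _; apply: sqfree_scale_at.
rewrite prod_scale_first // prod_fiber_prod // => i i_rng.
by have := @incr_leq k n k_incr i n; lia.
Qed.

Lemma sqf_power_collect n (s : nat -> R) (k : nat -> nat) c m :
  c \is a GRing.unit -> (0 < m)%N ->
  (forall i, (1 <= i <= n)%N -> sqfree (s i)) ->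
  (forall i j, (1 <= i <= n)%N -> (1 <= j <= n)%N -> i != j -> rcoprime (s i) (s j)) ->
  (forall i j, (1 <= i <= n)%N -> (1 <= j <= n)%N -> k i = k j -> i = j) ->
  (forall i, (1 <= i <= n)%N -> (1 <= k i <= m)%N) ->
  sqf_power_factorization (c * \prod_(1 <= i < n.+1) s i ^+ k i).
Proof.
move=> c_u m_gt0 s_sqf s_cop k_inj k_rng.
have T_sqf j : sqfree (fiber_prod s k n j) by apply: sqfree_fiber_prod.
exists m, [eta fiber_prod s k n with 1%N |-> c * fiber_prod s k n 1%N].
split => //; split; [|split].
- by move=> j _; apply: sqfree_scale_at.
- move=> j j' _ _ jj'; apply: rcoprime_scale_at => //.
  exact: rcoprime_fiber_prod.
- by rewrite prod_scale_first // prod_fiber_prod // => i /k_rng; lia.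
Qed.

Lemma power_to_reduced a : a \isn't a GRing.unit ->
  sqf_power_factorization a -> reduced_sqf_power_factorization a.
Proof.
move=> a_nu [n [s [_ [s_sqf [s_cop a_def]]]]]; subst a.
have [N [k [c [N_gt0 c_u k_rng k_incr ->]]]] := prod_drop_units a_nu.
have k_gt0 i : (1 <= i <= N)%N -> (1 <= k i)%N by case/k_rng => /andP[].
exists N, (fun i => s (k i)), k, c; split => //; split.
  by move=> i /k_rng[/andP[k_ge1 k_lt] s_nu]; split => //; apply: s_sqf; lia.
split; first by apply: k_gt0; rewrite N_gt0.
split => //; split; last by [].
move=> i j i_rng j_rng ij; have [/andP[ki_ge1 ki_lt] _] := k_rng i i_rng.
have [/andP[kj_ge1 kj_lt] _] := k_rng j j_rng.
by apply: s_cop; [lia | lia | apply: contra ij => /eqP /(incr_inj k_incr i_rng j_rng) ->].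
Qed.

Lemma reduced_to_power a : reduced_sqf_power_factorization a -> sqf_power_factorization a.
Proof.
move=> [n [s [k [c [n_gt0 [s_sqf [k1_gt0 [k_incr [s_cop [c_u ->]]]]]]]]]].
apply: (sqf_power_collect (m := k n)) (incr_inj k_incr) _ => //.
- by have := @incr_leq k n k_incr 1 n; lia.
- by move=> i /s_sqf[].
- move=> i i_rng; have := @incr_leq k n k_incr 1 i.
  by have := @incr_leq k n k_incr i n; lia.
Qed.

Definition reduced_sqf_chain N (t : nat -> R) (k : nat -> nat) :=
  [/\ (0 < N)%N,
      forall i, (1 <= i <= N)%N -> sqfree (t i) /\ t i \isn't a GRing.unit,
      forall i, (1 <= i <= N)%N -> (1 <= k i)%N &
      forall i, (1 <= i < N)%N -> rdvd (t i) (t i.+1) /\ ~ rassoc (t i) (t i.+1)].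

Lemma reduced_sqf_chain1 x : sqfree x -> x \isn't a GRing.unit ->
  reduced_sqf_chain 1 (fun _ => x) (fun _ => 1%N).
Proof. by move=> x_sqf x_nu; split => // i i_rng; exfalso; lia. Qed.

Lemma reduced_sqf_chain_bump N t k :
  reduced_sqf_chain N t k -> reduced_sqf_chain N t [eta k with N |-> (k N).+1].
Proof. by case=> N_gt0 t_sqf k_gt0 t_chain; split => // i /= /k_gt0; case: ifP. Qed.

Lemma reduced_sqf_chain_push N t k x : reduced_sqf_chain N t k ->
  sqfree x -> rdvd (t N) x -> ~ rassoc (t N) x ->
  reduced_sqf_chain N.+1 [eta t with N.+1 |-> x] [eta k with N.+1 |-> 1%N].
Proof.
case=> N_gt0 t_sqf k_gt0 t_chain x_sqf tN_x tN_nx.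
have [_ tN_nu] : sqfree (t N) /\ t N \isn't a GRing.unit by apply: t_sqf; rewrite N_gt0 /=.
split => // i i_rng /=.
- case: eqP => [_ | /eqP i_ne]; last by apply: t_sqf; lia.
  by split => //; apply: contra tN_nu => /(rdvd_unit tN_x).
- by case: eqP => // /eqP i_ne; apply: k_gt0; lia.
- rewrite (ltn_eqF (_ : i < N.+1)%N) ?eqSS; last by case/andP: i_rng.
  by case: eqP => [-> // | /eqP i_ne]; apply: t_chain; lia.
Qed.

Lemma sqf_chain_reduce n (s : nat -> R) :
  (forall i, (1 <= i <= n)%N -> sqfree (s i)) ->
  (forall i, (1 <= i < n)%N -> rdvd (s i) (s i.+1)) ->
  \prod_(1 <= i < n.+1) s i \is a GRing.unit \/
  exists N t k c, [/\ reduced_sqf_chain N t k, c \is a GRing.unit, (0 < n)%N,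
    rdvd (t N) (s n) & \prod_(1 <= i < n.+1) s i = c * \prod_(1 <= i < N.+1) t i ^+ k i].
Proof.
elim: n => [|n IHn] s_sqf s_chain; first by left; rewrite big_geq ?unitr1.
have s_sqf' i : (1 <= i <= n)%N -> sqfree (s i) by move=> i_rng; apply: s_sqf; lia.
have s_chain' i : (1 <= i < n)%N -> rdvd (s i) (s i.+1) by move=> i_rng; apply: s_chain; lia.
have sn_sqf : sqfree (s n.+1) by apply: s_sqf; lia.
rewrite big_nat_recr //=.
have [P_u | [N [t [k [c [t_red c_u n_gt0 tN_sn ->]]]]]] := IHn s_sqf' s_chain'.
  have [sn_u | sn_nu] := boolP (s n.+1 \is a GRing.unit).
    by left; rewrite unitrM P_u sn_u.
  right; exists 1%N, (fun _ => s n.+1), (fun _ => 1%N), (\prod_(1 <= i < n.+1) s i).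
  by split => //; [exact: reduced_sqf_chain1 | exact: rdvd_refl | rewrite big_nat1 expr1].
right; have tN_sn1 : rdvd (t N) (s n.+1) by apply: rdvd_trans tN_sn (s_chain n _); lia.
have [N_gt0 t_sqf _ _] := t_red.
have [tN_sqf _] : sqfree (t N) /\ t N \isn't a GRing.unit by apply: t_sqf; rewrite N_gt0 /=.
have [/(sqfree_rassoc tN_sqf)[u u_u ->] | tN_nsn1] := classic (rassoc (t N) (s n.+1)).
  exists N, t, [eta k with N |-> (k N).+1], (c * u); split => //.
  - exact: reduced_sqf_chain_bump.
  - by rewrite unitrM c_u u_u.
  - by exists u.
  rewrite [in RHS](prod_nat_recr_eq (G := fun i => t i ^+ k i)) ?big_nat_recr //=.
    by rewrite eqxx exprSr; ring.
  by move=> i /andP[_ /ltn_eqF ->].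
exists N.+1, [eta t with N.+1 |-> s n.+1], [eta k with N.+1 |-> 1%N], c; split => //.
- exact: reduced_sqf_chain_push.
- by rewrite /= eqxx; apply: rdvd_refl.
rewrite [in RHS](prod_nat_recr_eq (G := fun i => t i ^+ k i)) /= ?eqxx ?expr1 ?mulrA //.
by move=> i /andP[_ /ltn_eqF ->].
Qed.

Lemma chain_to_reduced a : a \isn't a GRing.unit ->
  sqf_chain_factorization a -> reduced_sqf_chain_factorization a.
Proof.
move=> a_nu [n [s [_ [s_sqf [s_chain a_def]]]]].
have [s_u | [N [t [k [c [[N_gt0 t_sqf k_gt0 t_chain] c_u _ _ s_def]]]]]] :=
  sqf_chain_reduce s_sqf s_chain; first by rewrite a_def s_u in a_nu.
by exists N, t, k, c; rewrite a_def s_def.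
Qed.

Lemma reduced_to_chain a : reduced_sqf_chain_factorization a -> sqf_chain_factorization a.
Proof.
move=> [N [t [k [c [N_gt0 [t_sqf [k_gt0 [t_chain [c_u ->]]]]]]]]].
pose S := repeat_indices k N.
have S_sorted : sorted leq S := sort_sorted leq_total _.
have S_gt0 : (0 < size S)%N.
  have : 1%N \in S by rewrite mem_repeat_indices k_gt0 ?N_gt0.
  by case: (S).
have S_nth j : (1 <= j <= size S)%N -> (1 <= nth 0%N S j.-1 <= N)%N.
  case/andP => j_gt0 j_le; have : nth 0%N S j.-1 \in S by rewrite mem_nth // prednK.
  by rewrite mem_repeat_indices => /andP[].
pose s j := t (nth 0%N S j.-1).
exists (size S), [eta s with 1%N |-> c * s 1%N]; split => //; split; [|split].
- by move=> j /S_nth/t_sqf[s_sqf _]; apply: sqfree_scale_at.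
- move=> j /andP[j_gt0 j_lt] /=; rewrite (gtn_eqF (_ : 1 < j.+1)%N) //.
  have S_le : (nth 0%N S j.-1 <= nth 0%N S j)%N.
    apply: (sorted_leq_nth leq_trans leqnn 0%N S_sorted); rewrite ?inE ?leq_pred //; lia.
  have s_dvd : rdvd (s j) (s j.+1).
    apply: (chain_rdvd_leq (fun i i_rng => (t_chain i i_rng).1)) => /=;
      have := S_nth j; have := S_nth j.+1 => /=; lia.
  by move: s_dvd; case: eqP => [->|_] s_dvd //; apply: rdvd_unitMl.
transitivity (\prod_(1 <= i < (size S).+1) [eta s with 1%N |-> c * s 1%N] i ^+ 1).
  rewrite prod_scale_first //; congr (_ * _); under [RHS]eq_bigr do rewrite expr1.
  by rewrite -(big_nth1 S t) prod_repeat_indices.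
by apply: eq_bigr => i _; rewrite expr1.
Qed.

Lemma reduced_chain_to_power a : reduced_sqf_chain_factorization a -> sqf_power_factorization a.
Proof.
move=> [N [t [k [c [N_gt0 [t_sqf [k_gt0 [t_chain [c_u ->]]]]]]]]].
have [y y_def] : exists y : nat -> R, forall i, (1 <= i < N)%N -> t i.+1 = t i * y i.
  apply: (choice (fun i y => (1 <= i < N)%N -> t i.+1 = t i * y)) => i.
  by have [/t_chain[[z t_z] _] | _] := boolP (1 <= i < N)%N; [exists z | exists 0].
(* x_1 = t_1 and x_(i+1) = y_i, so that t_i = x_1 ... x_i *)
pose x := [eta y \o predn with 1%N |-> t 1%N].
have t_prefix i : (1 <= i <= N)%N -> t i = \prod_(1 <= j < i.+1) x j.
  elim: i => [|i IHi] // /andP[_ i_lt].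
  have [-> | i_gt0] := posnP i; first by rewrite big_nat1.
  rewrite big_nat_recr //= -IHi ?i_gt0 ?(ltnW i_lt) // y_def ?i_gt0 //.
  by rewrite eqSS (negbTE (lt0n_neq0 i_gt0)).
pose K j := (\sum_(j <= i < N.+1) k i)%N.
have K_last : K N.+1 = 0%N by rewrite /K big_geq.
have K_decr i j : (1 <= i)%N -> (i < j <= N.+1)%N -> (K j < K i)%N.
  move=> i_gt0 /andP[ij jN]; rewrite /K (big_cat_nat (ltnW ij) jN) /= (big_ltn ij).
  by have := k_gt0 i; lia.
have [tN_sqf _] : sqfree (t N) /\ t N \isn't a GRing.unit by apply: t_sqf; rewrite N_gt0 /=.
have x_sqf : sqfree (\prod_(1 <= j < N.+1) x j) by rewrite -t_prefix // N_gt0 leqnn.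
have -> : \prod_(1 <= i < N.+1) t i ^+ k i = \prod_(1 <= j < N.+1) x j ^+ K j.
  by rewrite -prod_prefix_prod_expn; apply: eq_big_nat => i /t_prefix ->.
apply: (sqf_power_collect (m := K 1%N)) => //.
- by have := K_decr 1%N N.+1; rewrite K_last; lia.
- by move=> j j_rng; apply: (sqfree_prod_factor _ x_sqf); rewrite mem_index_iota.
- move=> i j i_rng j_rng ij; apply: (sqfree_prod_rcoprime _ _ _ ij x_sqf);
    by rewrite ?iota_uniq ?mem_index_iota.
- move=> i j i_rng j_rng Kij; have [ij | ji | //] := ltngtP i j.
  + by have := K_decr i j; rewrite Kij ltnn; lia.
  + by have := K_decr j i; rewrite Kij ltnn; lia.
- move=> j /andP[j_gt0 j_le]; apply/andP; split.
    by rewrite -K_last; apply: K_decr; rewrite // ltnS j_le leqnn.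
  have [-> // | j_ne1] := eqVneq j 1%N.
  by apply/ltnW/K_decr => //; lia.
Qed.

End Factorizations.

Theorem proposition1 (R : comUnitRingType) (a : R)
  (ha0 : a != 0) (hau : a \isn't a GRing.unit) :
  let C1 := exists b c : R, sqfree c /\ a = b ^+ 2 * c in
  let C2 := exists (n : nat) (s : nat -> R),
      (forall i, (i <= n)%N -> sqfree (s i)) /\
      a = \prod_(0 <= i < n.+1) s i ^+ (2 ^ i)%N in
  let C3 := exists (n : nat) (s : nat -> R) (k : nat -> nat) (c : R),
      (1 <= n)%N /\
      (forall i, (1 <= i <= n)%N -> sqfree (s i) /\ s i \isn't a GRing.unit) /\
      (forall i, (1 <= i < n)%N -> (k i < k i.+1)%N) /\
      c \is a GRing.unit /\
      a = c * \prod_(1 <= i < n.+1) s i ^+ (2 ^ k i)%N in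
  let C4 := exists (n : nat) (s : nat -> R),
      (1 <= n)%N /\
      (forall i, (1 <= i <= n)%N -> sqfree (s i)) /\
      (forall i, (1 <= i < n)%N -> rdvd (s i) (s i.+1)) /\
      a = \prod_(1 <= i < n.+1) s i in
  let C5 := exists (n : nat) (s : nat -> R) (k : nat -> nat) (c : R),
      (1 <= n)%N /\
      (forall i, (1 <= i <= n)%N -> sqfree (s i) /\ s i \isn't a GRing.unit) /\
      (forall i, (1 <= i <= n)%N -> (1 <= k i)%N) /\
      (forall i, (1 <= i < n)%N -> rdvd (s i) (s i.+1) /\ ~ rassoc (s i) (s i.+1)) /\
      c \is a GRing.unit /\
      a = c * \prod_(1 <= i < n.+1) s i ^+ k i in
  let C6 := exists (n : nat) (s : nat -> R),
      (1 <= n)%N /\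
      (forall i, (1 <= i <= n)%N -> sqfree (s i)) /\
      (forall i j, (1 <= i <= n)%N -> (1 <= j <= n)%N -> i != j -> rcoprime (s i) (s j)) /\
      a = \prod_(1 <= i < n.+1) s i ^+ i in
  let C7 := exists (n : nat) (s : nat -> R) (k : nat -> nat) (c : R),
      (1 <= n)%N /\
      (forall i, (1 <= i <= n)%N -> sqfree (s i) /\ s i \isn't a GRing.unit) /\
      (1 <= k 1)%N /\
      (forall i, (1 <= i < n)%N -> (k i < k i.+1)%N) /\
      (forall i j, (1 <= i <= n)%N -> (1 <= j <= n)%N -> i != j -> rcoprime (s i) (s j)) /\
      c \is a GRing.unit /\
      a = c * \prod_(1 <= i < n.+1) s i ^+ k i in
  (C2 -> C1) /\ (C2 <-> C3) /\ (C4 <-> C5) /\ (C5 -> C6) /\ (C6 <-> C7).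
Proof.
move=> C1 C2 C3 C4 C5 C6 C7.
split; first exact: dyadic_to_square.
split; first by split; [exact: dyadic_to_reduced | exact: reduced_to_dyadic].
split; first by split; [exact: chain_to_reduced | exact: reduced_to_chain].
split; first exact: reduced_chain_to_power.
by split; [exact: power_to_reduced | exact: reduced_to_power].
Qed.
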